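(* (Limited Loss Theorem.) Consider any instance of the repairman problem with unit-length time windows, and let $R^*$ be an optimal service run with respect to the untrimmed requests. Then there exists a service run $R$ with respect to the trimmed requests such that $\pi(R) \geq \frac{1}{3}\,\pi(R^* )$.
   Context: Repairman problem: we are given a weighted undirected graph (distances are shortest-path distances) and a set of service requests; each request has a location (a node; several requests may share a node) and a time window $[a,a+1)$ of unit length. A repairman moves in the graph at a fixed given speed, and may start at any location at any time and stop anywhere. He performs a service event for a request when he is at its location during its time window; each request served yields profit 1. A service run is a feasible sequence of service events; its profit $\pi(R)$ is the total profit of the requests it serves. Trimming: divide time at the integer multiples of $1/2$; a period is a time interval from one such division up to but not including the next. Assume no window starts at a division (and all window start times are positive). Each unit window then wholly contains exactly one period, and the trimmed request is the request whose time window is replaced by that period. A service run with respect to trimmed requests serves a request only when at its location during its trimmed window. *)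

From mathcomp Require Import all_boot all_order all_algebra.
From mathcomp Require Import reals.
Set Implicit Arguments. Unset Strict Implicit. Unset Printing Implicit Defensive.
Import Order.TTheory GRing.Theory Num.Theory.
Local Open Scope ring_scope.

Section Repairman.
Variables (R : realType) (V : finType).

(* A weighted undirected graph on the finite node set V:
   E u v = Some w  iff  there is an edge {u,v} of weight w. *)
Definition undirected_weighted (E : V -> V -> option R) : Prop :=
  (forall u v, E u v = E v u) /\ (forall u v w, E u v = Some w -> 0 < w).

Inductive walk (E : V -> V -> option R) : V -> V -> R -> Prop :=
| walk_nil u : walk E u u 0
| walk_cons u x v w L : E u x = Some w -> walk E x v L -> walk E u v (w + L).

Definition can_travel (E : V -> V -> option R) (s : R) (u v : V) (T : R) : Prop :=
  exists L, walk E u v L /\ L <= s * T.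

Fixpoint consec {A : Type} (P : A -> A -> Prop) (l : seq A) : Prop :=
  match l with
  | x :: ((y :: _) as l') => P x y /\ consec P l'
  | _ => True
  end.

Definition service_run (E : V -> V -> option R) (s : R) (n : nat)
    (loc : 'I_n -> V) (win : 'I_n -> R -> Prop) (r : seq ('I_n * R)) : Prop :=
  (forall e, e \in r -> win e.1 e.2) /\
  consec (fun e f => e.2 <= f.2 /\ can_travel E s (loc e.1) (loc f.1) (f.2 - e.2)) r.

Definition profit (n : nat) (r : seq ('I_n * R)) : nat := size (undup (map fst r)).

Definition unit_window (n : nat) (a : 'I_n -> R) (i : 'I_n) (t : R) : Prop :=
  a i <= t < a i + 1.

Definition trimmed_window (n : nat) (a : 'I_n -> R) (i : 'I_n) (t : R) : Prop :=
  exists k : int, a i <= k%:~R / 2 /\ (k%:~R + 1) / 2 <= a i + 1 /\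
                  k%:~R / 2 <= t < (k%:~R + 1) / 2.

End Repairman.

From mathcomp Require Import all_boot all_order all_algebra.
From mathcomp Require Import reals boolp.
From mathcomp Require Import ring lra zify.
Set Implicit Arguments. Unset Strict Implicit. Unset Printing Implicit Defensive.
Import Order.TTheory GRing.Theory Num.Theory.
Local Open Scope ring_scope.

(* A unit window [a, a+1) contains a whole period P = [k/2, (k+1)/2), and every
   t in [a, a+1) lies in P, in the period before it or in the one after it.  So
   translating an optimal run in time by 0, +1/2 or -1/2 (translation keeps a run
   feasible) and dropping the events that miss their trimmed window yields three
   trimmed runs which together serve every request served by the optimal run;
   one of them earns at least a third of its profit. *)

Lemma pigeonhole_sum {T : eqType} {cs : seq T} {f : T -> nat} {p : nat} :
  (p <= \sum_(c <- cs) f c)%N -> cs != [::] ->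
  exists2 c, c \in cs & (p <= size cs * f c)%N.
Proof.
move=> p_le cs_ne; apply/hasP; apply: contraTT p_le => /hasPn small.
have [c c_cs] : exists c, c \in cs.
  by case: cs cs_ne {small} => [|c cs] //; exists c; rewrite mem_head.
have p_gt0 : (0 < p)%N by have := small c c_cs; rewrite -ltnNge; lia.
have size_gt0 : (0 < size cs)%N by case: cs cs_ne {small c_cs}.
rewrite -ltnNge -(ltn_pmul2l size_gt0) big_distrr /=.
apply: (@leq_ltn_trans (\sum_(d <- cs) p.-1)).
  rewrite big_seq_cond [X in (_ <= X)%N]big_seq_cond.
  apply: leq_sum => d /andP[d_cs _].
  by have := small d d_cs; rewrite -ltnNge; lia.
by rewrite -[p.-1]muln1 -big_distrr sum1_size /=; nia.
Qed.

Lemma consec_trans_cons {A : Type} (P : A -> A -> Prop) x y l :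
  (forall a b c, P a b -> P b c -> P a c) ->
  P x y -> consec P (y :: l) -> consec P (x :: l).
Proof.
move=> P_trans Pxy; case: l => [|z l] //= [Pyz Pl].
by split=> //; exact: P_trans Pxy Pyz.
Qed.

Lemma consec_cons_filter {A : Type} (P : A -> A -> Prop) (f : pred A) x l :
  (forall a b c, P a b -> P b c -> P a c) ->
  consec P (x :: l) -> consec P (x :: filter f l).
Proof.
move=> P_trans; elim: l x => [|y l IHl] x //= [Pxy Pyl].
case: (f y) => /=; first by split=> //; exact: IHl.
exact: consec_trans_cons P_trans Pxy (IHl _ Pyl).
Qed.

Lemma consec_filter {A : Type} (P : A -> A -> Prop) (f : pred A) l :
  (forall a b c, P a b -> P b c -> P a c) ->
  consec P l -> consec P (filter f l).
Proof.
move=> P_trans; elim: l => [|x l IHl] //= Pxl.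
case: (f x); first exact: consec_cons_filter.
by apply: IHl; case: (l) Pxl => [|y l'] //= [].
Qed.

Lemma consec_map {A B : Type} (P : A -> A -> Prop) (Q : B -> B -> Prop)
    (g : B -> A) l :
  (forall a b, Q a b -> P (g a) (g b)) -> consec Q l -> consec P (map g l).
Proof.
move=> QP; elim: l => [|x l IHl] //=; case: l IHl => [|y l] IHl //= [Qxy Ql].
by split; [exact: QP | exact: IHl].
Qed.

Section ShiftedRuns.
Variables (R : realType) (V : finType) (E : V -> V -> option R) (s : R).

Lemma walk_cat u v w L1 L2 :
  walk E u v L1 -> walk E v w L2 -> walk E u w (L1 + L2).
Proof.
elim=> [x|x y z wt L Exy _ IH] Hvw; first by rewrite add0r.
by rewrite -addrA; exact: walk_cons Exy (IH Hvw).
Qed.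

Lemma can_travel_trans u v w T1 T2 :
  can_travel E s u v T1 -> can_travel E s v w T2 -> can_travel E s u w (T1 + T2).
Proof.
move=> [L1 [W1 le1]] [L2 [W2 le2]]; exists (L1 + L2).
by split; [exact: walk_cat W1 W2 | rewrite mulrDr lerD].
Qed.

Variables (n : nat) (loc : 'I_n -> V).

Definition reaches (e f : 'I_n * R) : Prop :=
  e.2 <= f.2 /\ can_travel E s (loc e.1) (loc f.1) (f.2 - e.2).

Lemma reaches_trans e f g : reaches e f -> reaches f g -> reaches e g.
Proof.
move=> [ef Tef] [fg Tfg]; split; first exact: le_trans ef fg.
have -> : g.2 - e.2 = (f.2 - e.2) + (g.2 - f.2) by ring.
exact: can_travel_trans Tef Tfg.
Qed.

Definition shift_event (c : R) (e : 'I_n * R) : 'I_n * R := (e.1, e.2 + c).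

Lemma reaches_shift c e f : reaches e f -> reaches (shift_event c e) (shift_event c f).
Proof.
move=> [ef Tef]; split; first by rewrite /= lerD2r.
by have -> : f.2 + c - (e.2 + c) = f.2 - e.2 by ring.
Qed.

Definition trimmed_run (a : 'I_n -> R) (c : R) (r : seq ('I_n * R)) :=
  [seq e <- map (shift_event c) r | `[< trimmed_window a e.1 e.2 >]].

Lemma trimmed_run_service (win : 'I_n -> R -> Prop) a c r :
  service_run E s loc win r -> service_run E s loc (trimmed_window a) (trimmed_run a c r).
Proof.
move=> [_ r_feas]; split; first by move=> e; rewrite mem_filter => /andP[/asboolP].
apply: consec_filter reaches_trans _.
exact: consec_map (reaches_shift c) r_feas.
Qed.

Lemma profit_le_sum_trimmed (a : 'I_n -> R) (cs : seq R) r :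
  (forall e, e \in r -> exists2 c, c \in cs & trimmed_window a e.1 (e.2 + c)) ->
  (profit r <= \sum_(c <- cs) profit (trimmed_run a c r))%N.
Proof.
move=> covered.
have -> : \sum_(c <- cs) profit (trimmed_run a c r) =
    size (flatten [seq undup (map fst (trimmed_run a c r)) | c <- cs]).
  by rewrite size_flatten sumnE /shape -map_comp big_map.
rewrite uniq_leq_size ?undup_uniq //.
move=> i; rewrite mem_undup => /mapP[[j t] jt_r /= ->].
have [c c_cs trimmed] := covered _ jt_r.
apply/flattenP; exists (undup (map fst (trimmed_run a c r))); first exact: map_f.
rewrite mem_undup; apply/mapP; exists (j, t + c) => //.
by rewrite mem_filter (map_f (shift_event c) jt_r) andbT; exact/asboolP.
Qed.

End ShiftedRuns.

Lemma unit_window_shift_trimmed (R : realType) (n : nat) (a : 'I_n -> R) i t :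
  unit_window a i t ->
  exists2 c, c \in [:: 0; 1/2; -(1/2)] & trimmed_window a i (t + c).
Proof.
move=> /andP[a_le_t t_lt_a1].
(* k/2 is the first half-integer strictly after a i. *)
pose k := Num.floor (2 * a i) + 1.
have k_gt : 2 * a i < k%:~R by exact: floorD1_gt.
have k_le : k%:~R <= 2 * a i + 1 by rewrite /k intrD lerD2r floor_le.
have in_period c : k%:~R / 2 <= t + c < (k%:~R + 1) / 2 -> trimmed_window a i (t + c).
  by move=> tc; exists k; split; [lra | split; [lra | exact: tc]].
case: (ltP t (k%:~R / 2)) => t_lo.
  by exists (1/2); rewrite ?inE ?eqxx ?orbT //; apply: in_period; apply/andP; lra.
case: (ltP t ((k%:~R + 1) / 2)) => t_hi.
  by exists 0; rewrite ?inE ?eqxx //; apply: in_period; apply/andP; lra.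
by exists (-(1/2)); rewrite ?inE ?eqxx ?orbT //; apply: in_period; apply/andP; lra.
Qed.

Theorem theorem1 (R : realType) (V : finType) (E : V -> V -> option R) (s : R)
  (n : nat) (loc : 'I_n -> V) (a : 'I_n -> R) :
  undirected_weighted E ->
  0 < s ->
  (forall i, 0 < a i) ->
  (forall (i : 'I_n) (k : int), a i <> k%:~R / 2) ->
  forall Rstar : seq ('I_n * R),
    service_run E s loc (unit_window a) Rstar ->
    (forall R' : seq ('I_n * R),
        service_run E s loc (unit_window a) R' -> (profit R' <= profit Rstar)%N) ->
  exists Rt : seq ('I_n * R),
    service_run E s loc (trimmed_window a) Rt /\
    (profit Rstar)%:R / 3 <= (profit Rt)%:R :> R.
Proof.
move=> _ _ _ _ Rs Rs_run _.
have covered e : e \in Rs -> exists2 c, c \in [:: 0; 1/2; -(1/2)] &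
    trimmed_window a e.1 (e.2 + c).
  by move=> e_Rs; apply: unit_window_shift_trimmed; exact: Rs_run.1.
have [c _ third] := pigeonhole_sum (profit_le_sum_trimmed covered) isT.
exists (trimmed_run a c Rs); split; first exact: trimmed_run_service Rs_run.
by rewrite ler_pdivrMr // mulrC -natrM ler_nat.
Qed.
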